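(* For all $n\ge 1$, $\left|\mathrm{Av}_n[\overline{14}32]\right|=C_{n-1}$, where $C_m=\frac{1}{m+1}\binom{2m}{m}$ is the $m$th Catalan number.
   Context: For $\sigma\in S_n$, the cyclic permutation $[\sigma]$ is the set of all rotations of $\sigma$; $[S_n]$ is the set of cyclic permutations of length $n$. $[\sigma]$ contains the vincular pattern $[\overline{14}32]$ if some rotation of $\sigma$ has entries $a,b,c,d$ appearing in this order with $a,b$ adjacent and $a<d<c<b$; $\mathrm{Av}_n[\overline{14}32]$ is the set of $[\sigma]\in[S_n]$ not containing it. *)

From mathcomp Require Import all_boot all_fingroup.
Set Implicit Arguments. Unset Strict Implicit. Unset Printing Implicit Defensive.

(* One-line notation of s in S_n (values 0..n-1 instead of 1..n; only the
   relative order matters for pattern containment). *)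
Definition word n (s : 'S_n) : seq nat := [seq val (s i) | i <- enum 'I_n].

(* w contains the vincular pattern [14]32 (linearly): entries a,b,c,d at
   positions i, i+1, k, l with i+1 < k < l and a < d < c < b. *)
Definition contains_14_32 (w : seq nat) : bool :=
  [exists i : 'I_(size w), [exists k : 'I_(size w), [exists l : 'I_(size w),
     [&& i.+1 < k, k < l,
         nth 0 w i < nth 0 w l, nth 0 w l < nth 0 w k
       & nth 0 w k < nth 0 w i.+1]]]].

Definition cyc n (s : 'S_n) : {set 'S_n} :=
  [set t : 'S_n | [exists k : 'I_n, word t == rot k (word s)]].

Definition cyc_contains n (s : 'S_n) : bool :=
  [exists k : 'I_n, contains_14_32 (rot k (word s))].

Definition Av_cyc n : {set {set 'S_n}} :=
  [set cyc s | s in [set s : 'S_n | ~~ cyc_contains s]].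

Definition catalan (m : nat) : nat := 'C(m.*2, m) %/ m.+1.

From mathcomp Require Import all_boot all_fingroup zify.
Set Implicit Arguments. Unset Strict Implicit. Unset Printing Implicit Defensive.

(* Each cyclic class is represented by the unique rotation of its one-line
   notation (values 0..n-1) that starts with 0.  These normal words form a
   generating tree: deleting the maximum of an avoider of length m+2 leaves an
   avoider of length m+1, and conversely a new maximum may be inserted right
   after an entry a exactly when a is active, i.e. the entries greater than a,
   read cyclically after a, increase.  After such an insertion the new maximum
   is active, and an old active entry e stays active iff a < e or a was the old
   maximum; hence a word with k active entries has children with 2, 3, ..., k+1
   active entries.  This is the Catalan generating tree (k) -> (2)(3)...(k+1),
   whose level sizes are ballot numbers. *)

(* Number of nodes at depth d below a node labelled k in the generating tree
   (k) -> (2)(3)...(k+1). *)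
Fixpoint catalan_tree (d k : nat) : nat :=
  if d is d'.+1 then sumn [seq catalan_tree d' j | j <- iota 2 k] else 1.

Lemma catalan_tree_succ d k :
  catalan_tree d.+1 k = sumn [seq catalan_tree d j | j <- iota 2 k].
Proof. by []. Qed.

Lemma catalan_treeS d k :
  catalan_tree d.+1 k.+1 = catalan_tree d.+1 k + catalan_tree d k.+2.
Proof.
by rewrite !catalan_tree_succ -[k.+1]addn1 iotaD map_cat sumn_cat /= addn0 addn1.
Qed.

Lemma catalan_tree1 k : catalan_tree 1 k = k.
Proof. by elim: k => // k IHk; rewrite catalan_treeS IHk addn1. Qed.

Lemma catalan_tree_ballot d k :
  catalan_tree d.+1 k.+1 + 'C((d.*2 + k).+2, d) = 'C((d.*2 + k).+2, d.+1).
Proof.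
elim: d k => [|d IHd] k; first by rewrite catalan_tree1 bin0 bin1 add0n addn1.
elim: k => [|k IHk].
  set N := (d.*2 + 1).+2.
  have eN : (d.+1.*2 + 0).+2 = N.+1 by rewrite doubleS /N; lia.
  have sym : 'C(N, d.+2) = 'C(N, d.+1) by rewrite -bin_sub /N; [congr 'C(_, _) |]; lia.
  rewrite catalan_treeS eN (binS N d) (binS N d.+1) sym add0n.
  by have := IHd 1; rewrite -/N; lia.
set N := (d.*2 + k.+2).+2.
have eN : (d.+1.*2 + k.+1).+2 = N.+1 by rewrite doubleS /N; lia.
have eN' : (d.+1.*2 + k).+2 = N by rewrite doubleS /N; lia.
rewrite catalan_treeS eN (binS N d) (binS N d.+1); move: IHk; rewrite eN'.
by have := IHd k.+2; rewrite -/N; lia.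
Qed.

Lemma catalan_tree_root d : catalan_tree d 1 = catalan d.
Proof.
case: d => [|d] //; rewrite /catalan doubleS.
have ballot := catalan_tree_ballot d 0; rewrite addn0 in ballot.
have pascal := mul_bin_left d.*2.+2 d.
rewrite -ballot (_ : d.*2.+2 - d = d.+2) in pascal; last by lia.
by rewrite -ballot (_ : _ + _ = catalan_tree d.+1 1 * d.+2) ?mulnK //; nia.
Qed.

Section CyclicSuccessors.

Variable T : eqType.
Implicit Types (w x y u v r : seq T) (a e : T).

Definition cyc_after w e : seq T := drop (index e w).+1 w ++ take (index e w) w.

Lemma rot_index_cyc_after w e : e \in w -> rot (index e w) w = e :: cyc_after w e.
Proof. exact: rot_index. Qed.

Lemma perm_cyc_after w e : e \in w -> perm_eq w (e :: cyc_after w e).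
Proof. by move=> ew; rewrite -rot_index_cyc_after // perm_sym perm_rot. Qed.

Lemma cyc_after_cat x e y : e \notin x -> cyc_after (x ++ e :: y) e = y ++ x.
Proof.
move=> ex; rewrite /cyc_after index_cat (negbTE ex) /= eqxx addn0.
by rewrite drop_cat take_cat ltnNge leqnSn ltnn subnn subSnn /= drop0 cats0.
Qed.

Lemma cyc_after_of_rot w i e r : uniq w -> rot i w = e :: r -> cyc_after w e = r.
Proof.
move=> Uw; case: (leqP (size w) i) => [/rot_oversize -> ew | ltiw].
  by rewrite ew /cyc_after /= eqxx drop0 cats0.
rewrite /rot (drop_nth e ltiw) => -[ei <-].
by rewrite /cyc_after -ei index_uniq.
Qed.

Lemma cyc_after_rot w i e : uniq w -> e \in w -> cyc_after (rot i w) e = cyc_after w e.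
Proof.
move=> Uw; rewrite -(mem_rot i) => /rot_to[j r rotw].
rewrite (cyc_after_of_rot _ rotw) ?rot_uniq //.
by rewrite rot_rot_add in rotw; rewrite (cyc_after_of_rot Uw rotw).
Qed.

Lemma cyc_after_shift w e a u v :
  uniq w -> e \in w -> cyc_after w e = u ++ a :: v -> cyc_after w a = v ++ e :: u.
Proof.
move=> Uw ew def_e.
have rotw : rot (index e w) w = (e :: u) ++ a :: v by rewrite rot_index_cyc_after // def_e.
have Ur : uniq ((e :: u) ++ a :: v) by rewrite -rotw rot_uniq.
have aw : a \in w by rewrite -(mem_rot (index e w)) rotw mem_cat mem_head orbT.
rewrite -(cyc_after_rot (index e w) Uw aw) rotw cyc_after_cat //.
by move: Ur; rewrite cat_uniq /= => /and3P[_ /norP[]].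
Qed.

Lemma cyc_after_insert x a y m e : uniq (x ++ a :: m :: y) -> e \in x ++ y ->
  exists u v, cyc_after (x ++ a :: y) e = u ++ a :: v
           /\ cyc_after (x ++ a :: m :: y) e = u ++ a :: m :: v.
Proof.
move=> U; rewrite mem_cat orbC -mem_cat => eyx.
have [p [q def_yx]] : exists p q, y ++ x = p ++ e :: q.
  by case/splitPr: eyx => p q; exists p, q.
have after_e s : uniq (x ++ a :: s ++ y) -> cyc_after (x ++ a :: s ++ y) e = q ++ a :: s ++ p.
  move=> Us; have rotw : rot (size x) (x ++ a :: s ++ y) = (a :: s ++ p) ++ e :: q.
    by rewrite rot_size_cat /= -catA def_yx -catA.
  have Ur : uniq ((a :: s ++ p) ++ e :: q) by rewrite -rotw rot_uniq.
  have ew : e \in x ++ a :: s ++ y by rewrite -(mem_rot (size x)) rotw mem_cat mem_head orbT.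
  rewrite -(cyc_after_rot (size x) Us ew) rotw cyc_after_cat //.
  by move: Ur; rewrite cat_uniq /= => /and3P[_ /norP[]].
exists q, p; split; last exact: (after_e [:: m]).
apply: (after_e [::]) (subseq_uniq _ U).
by rewrite cat_subseq // -cat1s -[a :: m :: y]cat1s cat_subseq // subseq_cons.
Qed.

End CyclicSuccessors.

Lemma perm_insert_cons (T : eqType) (x y : seq T) a m :
  perm_eq (x ++ a :: m :: y) (m :: x ++ a :: y).
Proof. by rewrite -[_ ++ _]/(x ++ [:: a] ++ [:: m] ++ y) catA perm_catCA /= -catA. Qed.

Lemma perm_iotaSr n : perm_eq (iota 0 n.+1) (n :: iota 0 n).
Proof. by rewrite -addn1 iotaD add0n cats1 perm_rcons. Qed.

Lemma sorted_filter_pairwise (T : Type) (leT : rel T) (P : pred T) s :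
  transitive leT ->
  sorted leT [seq x <- s | P x] = pairwise (fun x y => P x ==> P y ==> leT x y) s.
Proof.
move=> leT_tr; rewrite sorted_pairwise //.
elim: s => //= x s IHs; case: (P x) => /=; rewrite IHs ?all_filter //.
by rewrite all_predT.
Qed.

Lemma sorted_filter_cat (T : eqType) (leT : rel T) (P : pred T) s1 s2 x y :
  transitive leT -> sorted leT [seq z <- s1 ++ s2 | P z] ->
  x \in s1 -> y \in s2 -> P x -> P y -> leT x y.
Proof.
move=> leT_tr; rewrite sorted_filter_pairwise // pairwise_cat => /and3P[/allrelP le12 _ _].
by move=> xs1 ys2 Px Py; move: (le12 x y xs1 ys2); rewrite Px Py.
Qed.

Lemma sorted_leq_insert_max (s1 s2 : seq nat) m : all (fun z => z < m) (s1 ++ s2) ->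
  sorted leq (s1 ++ m :: s2) = sorted leq s1 && (s2 == [::]).
Proof.
rewrite all_cat => /andP[lt1 lt2]; rewrite !(sorted_pairwise leq_trans).
rewrite pairwise_cat /= allrel_consr andbCA.
case: s2 lt2 => [_ | z s2 /andP[ltz _]] /=; last by rewrite leqNgt ltz /= !andbF.
have le1m : all (fun z => z <= m) s1 by apply: sub_all lt1 => z /ltnW.
by rewrite le1m allrel0r !andbT.
Qed.

Definition active (w : seq nat) (e : nat) : bool :=
  sorted leq [seq z <- cyc_after w e | e < z].

(* An occurrence of [14]32 whose entry 1 is e, so that its entry 4 is the
   cyclic successor b of e. *)
Definition pattern_at (w : seq nat) (e : nat) : bool :=
  if cyc_after w e is b :: r then ~~ sorted leq [seq z <- r | e < z < b] else false.

Definition cyc_pattern (w : seq nat) : bool := has (pattern_at w) w.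

Lemma pattern_at_not_active w e : pattern_at w e -> ~~ active w e.
Proof.
rewrite /pattern_at /active; case: cyc_after => // b r; apply: contra.
rewrite !(sorted_filter_pairwise _ _ leq_trans) /= => /andP[_].
apply: sub_pairwise => c d le_cd; apply/implyP => /andP[ec _]; apply/implyP => /andP[ed _].
by rewrite ec ed in le_cd.
Qed.

Lemma cyc_pattern_rot w k : uniq w -> cyc_pattern (rot k w) = cyc_pattern w.
Proof.
move=> Uw; rewrite /cyc_pattern has_rot; apply: eq_in_has => e ew.
by rewrite /pattern_at cyc_after_rot.
Qed.

Lemma contains_14_32E w : contains_14_32 w =
  [exists i : 'I_(size w), ~~ sorted leq [seq z <- drop i.+2 w | nth 0 w i < z < nth 0 w i.+1]].
Proof.
apply/existsP/existsP => [[i /existsP[k /existsP[l]]] | [i nsorted]].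
  case/and5P=> lt_ik lt_kl lt_il lt_lk lt_k1; exists i.
  rewrite (sorted_filter_pairwise _ _ leq_trans); apply/negP => /(pairwiseP 0) sorted_kl.
  have lt_lw := ltn_ord l.
  have k_drop : k - i.+2 < size (drop i.+2 w) by rewrite size_drop; lia.
  have l_drop : l - i.+2 < size (drop i.+2 w) by rewrite size_drop; lia.
  by have := sorted_kl _ _ k_drop l_drop; rewrite !nth_drop !subnKC; lia.
exists i; move: nsorted; rewrite (sorted_filter_pairwise _ _ leq_trans).
apply: contraNT => /existsPn no_k; apply/(pairwiseP 0) => j1 j2 j1_drop j2_drop lt_12.
rewrite !inE size_drop in j1_drop j2_drop.
have k_w : i.+2 + j1 < size w by lia.
have l_w : i.+2 + j2 < size w by lia.
move: (no_k (Ordinal k_w)) => /existsPn/(_ (Ordinal l_w)).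
by rewrite !nth_drop /=; lia.
Qed.

Lemma contains_cyc_pattern w : uniq w -> contains_14_32 w -> cyc_pattern w.
Proof.
rewrite contains_14_32E => Uw /existsP[i nsorted].
have lt_i1 : i.+1 < size w.
  by rewrite ltnNge; apply: contra nsorted => ge_w; rewrite drop_oversize // (leq_trans ge_w).
set e := nth 0 w i; set b := nth 0 w i.+1.
have def_w : w = take i w ++ e :: b :: drop i.+2 w.
  by rewrite -(drop_nth 0 lt_i1) -drop_nth ?cat_take_drop // ltnW.
have after_e : cyc_after w e = b :: drop i.+2 w ++ take i w.
  rewrite {1}def_w cyc_after_cat //.
  by move: Uw; rewrite {1}def_w cat_uniq => /and3P[_ /norP[]].
apply/hasP; exists e; first exact: mem_nth.
by rewrite /pattern_at after_e filter_cat; apply: contra nsorted => /cat_sorted2[].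
Qed.

Lemma cyc_pattern_contains w : uniq w -> cyc_pattern w ->
  exists2 k, k < size w & contains_14_32 (rot k w).
Proof.
move=> Uw /hasP[e ew]; rewrite /pattern_at; case def_e: (cyc_after w e) => [|b r] // nsorted.
exists (index e w); first by rewrite index_mem.
rewrite rot_index_cyc_after // def_e contains_14_32E; apply/existsP.
by exists (Ordinal (isT : 0 < size [:: e, b & r])); rewrite /= drop0.
Qed.

Lemma arc_below_active v n e a u r : perm_eq v (iota 0 n.+1) -> e \in v ->
  cyc_after v e = u ++ a :: r -> active v a -> active v e ->
  all (fun z => z <= e) r = (a == n) || (a < e).
Proof.
move=> perm_v ev def_e; rewrite /active.
have Uv : uniq v by rewrite (perm_uniq perm_v) iota_uniq.
have : uniq (e :: u ++ a :: r) by rewrite -def_e -(perm_uniq (perm_cyc_after ev)).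
rewrite cons_uniq mem_cat inE cat_uniq => /and5P[/norP[_ /norP[ne_ea _]] _ _ ar _].
have mem_v z : (z \in v) = (z < n.+1) by rewrite (perm_mem perm_v) mem_iota.
have mem_e z : (z \in v) = (z == e) || (z \in u ++ a :: r).
  by rewrite (perm_mem (perm_cyc_after ev)) def_e inE.
have le_n z : z \in u ++ a :: r -> z <= n by move=> zr; rewrite -ltnS -mem_v mem_e zr orbT.
have le_an : a <= n by rewrite le_n // mem_cat mem_head orbT.
rewrite (cyc_after_shift Uv ev def_e) def_e.
case: (ltngtP a e) => [lt_ae | lt_ea | eq_ae] act_a act_e; last by rewrite eq_ae eqxx in ne_ea.
  rewrite orbT; apply/allP => z zr; rewrite leqNgt; apply/negP => lt_ez.
  have := sorted_filter_cat leq_trans act_a zr (mem_head e u) (ltn_trans lt_ae lt_ez) lt_ae.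
  by rewrite leqNgt lt_ez.
have lt_en := leq_trans lt_ea le_an.
rewrite orbF; case: eqP => [eq_an | /eqP ne_an].
  apply/allP => z zr; rewrite leqNgt; apply/negP => lt_ez.
  have a_ua : a \in u ++ [:: a] by rewrite mem_cat mem_seq1 eqxx orbT.
  rewrite -cat1s catA in act_e.
  have le_az := sorted_filter_cat leq_trans act_e a_ua zr lt_ea lt_ez.
  have le_zn : z <= n by rewrite le_n // mem_cat inE zr !orbT.
  by move: ar; rewrite (_ : a = z) ?zr //; apply/eqP; rewrite eqn_leq le_az eq_an le_zn.
have : n \in v by rewrite mem_v.
rewrite mem_e (gtn_eqF lt_en) mem_cat inE eq_sym (negbTE ne_an) /= => /orP[nu | nr].
  have := sorted_filter_cat leq_trans act_e nu (mem_head a r) lt_en lt_ea.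
  by rewrite leqNgt ltn_neqAle ne_an le_an.
by apply/negbTE/allPn; exists n; rewrite // -ltnNge.
Qed.

Definition insert_max (w : seq nat) (a : nat) : seq nat :=
  take (index a w).+1 w ++ size w :: drop (index a w).+1 w.

Definition n_active (w : seq nat) : nat := count (active w) w.

Lemma insert_max_cat x a y :
  a \notin x -> insert_max (x ++ a :: y) a = x ++ a :: size (x ++ a :: y) :: y.
Proof.
move=> ax; rewrite /insert_max index_cat (negbTE ax) /= eqxx addn0.
by rewrite take_cat drop_cat ltnNge leqnSn /= subSnn /= take0 drop0 -catA.
Qed.

Section InsertMax.

Variables (x y : seq nat) (a n : nat).
Hypothesis perm_v : perm_eq (x ++ a :: y) (iota 0 n.+1).

Local Notation v := (x ++ a :: y).
Local Notation w := (x ++ a :: n.+1 :: y).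

Let mem_v z : (z \in v) = (z < n.+1).
Proof. by rewrite (perm_mem perm_v) mem_iota. Qed.

Let mem_xy z : z \in x ++ y -> z \in v.
Proof. by rewrite !mem_cat inE => /orP[] ->; rewrite ?orbT. Qed.

Let lt_yxa z : z \in y ++ x ++ [:: a] -> z < n.+1.
Proof. by rewrite -mem_v !mem_cat !inE => /or3P[] ->; rewrite ?orbT. Qed.

Let lt_an : a < n.+1.
Proof. by rewrite -mem_v mem_cat mem_head orbT. Qed.

Let uniq_v : uniq v.
Proof. by rewrite (perm_uniq perm_v) iota_uniq. Qed.

Let notin_x : a \notin x.
Proof. by move: uniq_v; rewrite cat_uniq /= => /and3P[_ /norP[]]. Qed.

Let perm_w : perm_eq w (n.+1 :: v) := perm_insert_cons x y a n.+1.

Let uniq_w : uniq w.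
Proof. by rewrite (perm_uniq perm_w) /= mem_v ltnn uniq_v. Qed.

Let cyc_after_w_max : cyc_after w n.+1 = y ++ x ++ [:: a].
Proof.
rewrite -[w]/(x ++ [:: a] ++ n.+1 :: y) catA cyc_after_cat ?catA //.
have : n.+1 \notin v by rewrite mem_v ltnn.
by apply: contra; rewrite !mem_cat mem_seq1 inE => /orP[-> | ->]; rewrite ?orbT.
Qed.

Let cyc_after_w_a : cyc_after w a = n.+1 :: y ++ x.
Proof. exact: cyc_after_cat notin_x. Qed.

Let cyc_after_v_a : cyc_after v a = y ++ x.
Proof. exact: cyc_after_cat notin_x. Qed.

Lemma insert_max_iota : insert_max v a = w.
Proof.
by rewrite (insert_max_cat _ notin_x) (_ : size v = n.+1) // (perm_size perm_v) size_iota.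
Qed.

Lemma perm_insert_iota : perm_eq w (iota 0 n.+2).
Proof. by rewrite (permPl perm_w) (permPr (perm_iotaSr n.+1)) perm_cons. Qed.

Lemma index_insert_max : index n.+1 w = (size x).+1.
Proof.
have nv : n.+1 \notin v by rewrite mem_v ltnn.
have nx : n.+1 \notin x by apply: contraNN nv; rewrite mem_cat => ->.
have na : (a == n.+1) = false := ltn_eqF lt_an.
by rewrite index_cat (negbTE nx) /= na eqxx addn1.
Qed.

Lemma cyc_pattern_insert : cyc_pattern w = cyc_pattern v || ~~ active v a.
Proof.
have perm_v' : perm_eq v (a :: x ++ y) by rewrite -[v]/(x ++ [:: a] ++ y) perm_catCA.
rewrite /cyc_pattern (perm_has _ perm_w) /= !(perm_has _ perm_v') /=.
have -> : pattern_at w n.+1 = false.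
  rewrite /pattern_at cyc_after_w_max; case def_r: (y ++ x ++ [:: a]) => [|b r] //.
  rewrite (eq_in_filter (a2 := pred0)) ?filter_pred0 // => z zr.
  have /lt_yxa/ltnW : z \in y ++ x ++ [:: a] by rewrite def_r inE zr orbT.
  by rewrite leqNgt => /negbTE ->.
have -> : pattern_at w a = ~~ active v a.
  rewrite /pattern_at /active cyc_after_w_a cyc_after_v_a; congr (~~ sorted _ _).
  by apply: eq_in_filter => z zyx; rewrite lt_yxa ?andbT // catA mem_cat zyx.
have -> : has (pattern_at w) (x ++ y) = has (pattern_at v) (x ++ y).
  apply: eq_in_has => e exy; have [u [r [def_v def_w]]] := cyc_after_insert uniq_w exy.
  rewrite /pattern_at def_v def_w; case: u def_v def_w => [|b u] def_v def_w /=.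
    by rewrite [n.+1 < a]ltnNge (ltnW lt_an) andbF.
  have /ltnW lt_bn : b < n.+1.
    by rewrite -mem_v (perm_mem (perm_cyc_after (mem_xy exy))) def_v !inE eqxx orbT.
  by rewrite !filter_cat /= [n.+1 < b]ltnNge lt_bn andbF.
by have := @pattern_at_not_active v a; case: pattern_at; case: active; case: has => // /(_ isT).
Qed.

Lemma active_insert_max : active w n.+1.
Proof.
rewrite /active cyc_after_w_max (eq_in_filter (a2 := pred0)) ?filter_pred0 // => z.
by move=> /lt_yxa /ltnW; rewrite leqNgt => /negbTE.
Qed.

Lemma active_insert_after : active v a -> active w a = (a == n).
Proof.
move=> act_a; rewrite /active cyc_after_w_a /= lt_an -[_ :: _]cat0s sorted_leq_insert_max.
  rewrite /= -[[seq _ <- _ | _] == _]negbK -has_filter; apply/hasPn/eqP => [no_above | ->].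
    have le_an : a <= n by rewrite -ltnS.
    apply/eqP; rewrite eqn_leq le_an /=.
    have : n \in v by rewrite mem_v.
    rewrite mem_cat inE orbCA => /orP[/eqP-> // | nxy].
    by rewrite leqNgt no_above // mem_cat orbC.
  by move=> z zyx; rewrite -leqNgt -ltnS lt_yxa // catA mem_cat zyx.
by rewrite all_filter; apply/allP => z zyx /=; rewrite lt_yxa ?implybT // catA mem_cat zyx.
Qed.

Lemma active_insert_other e : active v a -> e \in x ++ y ->
  active w e = active v e && ((a == n) || (a < e)).
Proof.
move=> act_a exy; have [u [r [def_v def_w]]] := cyc_after_insert uniq_w exy.
have lt_en : e < n.+1 by rewrite -mem_v mem_xy.
have act_e : active v e = sorted leq [seq z <- (u ++ [:: a]) ++ r | e < z].
  by rewrite /active def_v -catA.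
rewrite act_e /active def_w -cat1s catA !(filter_cat _ (u ++ [:: a])) /= lt_en.
set s1 := [seq z <- u ++ [:: a] | e < z]; set s2 := [seq z <- r | e < z].
rewrite sorted_leq_insert_max; last first.
  rewrite -filter_cat all_filter; apply/allP => z zs /=; apply/implyP => _.
  by rewrite -mem_v (perm_mem (perm_cyc_after (mem_xy exy))) inE def_v -cat1s catA zs orbT.
rewrite (_ : sorted leq s1 && (s2 == [::]) = sorted leq (s1 ++ s2) && (s2 == [::])); last first.
  by case: eqP => [-> | _]; rewrite ?cats0 ?andbF.
case: (boolP (sorted leq (s1 ++ s2))) => [sorted_e | _] //=.
rewrite -[s2 == _]negbK -has_filter -all_predC.
rewrite -(arc_below_active perm_v (mem_xy exy) def_v act_a); last by rewrite act_e filter_cat.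
by apply: eq_all => z /=; rewrite -leqNgt.
Qed.

Lemma n_active_insert : active v a ->
  n_active w = (count (fun e => (a == n) || (a < e)) [seq e <- v | active v e]).+1.
Proof.
move=> act_a; rewrite /n_active ((seq.permP perm_w) (active w)) /= active_insert_max.
rewrite add1n count_filter; congr S; apply: eq_in_count => e /=.
rewrite mem_cat inE orbCA -mem_cat => /orP[/eqP-> | exy].
  by rewrite active_insert_after // act_a ltnn orbF andbT.
by rewrite active_insert_other // andbC.
Qed.

End InsertMax.

Lemma perm_ranks (s : seq nat) : uniq s ->
  perm_eq [seq count (fun e => a < e) s | a <- s] (iota 0 (size s)).
Proof.
move=> Us; pose rank a := count (fun e => a < e) s.
have rank_lt a : a \in s -> rank a < size s.
  move=> sa; rewrite -(count_predC (fun e => a < e) s) -[X in X < _]addn0 ltn_add2l.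
  by rewrite -has_count; apply/hasP; exists a; rewrite //= ltnn.
have rank_decr a b : b \in s -> a < b -> rank b < rank a.
  move=> sb lt_ab; pose above_b := predU (fun e => b < e) (pred1 b).
  have <- : count above_b s = (rank b).+1.
    have := count_predUI (fun e => b < e) (pred1 b) s.
    rewrite (@eq_count _ (predI (fun e => b < e) (pred1 b)) pred0) ?count_pred0 ?addn0.
      by move=> ->; rewrite (count_uniq_mem _ Us) sb addn1.
    by move=> e /=; case: eqP => [-> | _]; rewrite ?ltnn ?andbF.
  by apply: sub_count => e /orP[/(ltn_trans lt_ab) | /eqP->].
have rank_inj : {in s &, injective rank}.
  move=> a b sa sb eq_ab; apply/eqP; rewrite eqn_leq.
  case: (ltngtP a b) => [lt_ab | lt_ba | //].
  - by have := rank_decr a b sb lt_ab; rewrite eq_ab ltnn.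
  - by have := rank_decr b a sa lt_ba; rewrite eq_ab ltnn.
have uniq_ranks : uniq (map rank s) by rewrite (map_inj_in_uniq rank_inj).
apply: uniq_perm; rewrite ?iota_uniq //.
apply: (uniq_min_size uniq_ranks _ _).2 => [_ /mapP[a sa ->] |].
  by rewrite mem_iota rank_lt.
by rewrite size_iota size_map.
Qed.

Lemma perm_child_labels (s : seq nat) m : uniq s -> m \in s -> all (fun z => z <= m) s ->
  perm_eq [seq (count (fun e => (a == m) || (a < e)) s).+1 | a <- s] (iota 2 (size s)).
Proof.
move=> Us sm le_m; have perm_s := perm_to_rem sm.
have Ur : uniq (rem m s) by rewrite rem_uniq.
have size_s : size s = (size (rem m s)).+1 by rewrite (perm_size perm_s).
rewrite (perm_trans (perm_map _ perm_s)) //= eqxx (eq_count (a2 := predT)) // count_predT.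
have -> : [seq (count (fun e => (a == m) || (a < e)) s).+1 | a <- rem m s] =
          map (addn 2) [seq count (fun e => a < e) (rem m s) | a <- rem m s].
  rewrite -map_comp; apply/eq_in_map => a ar /=.
  have ne_am : a != m by move: ar; rewrite (mem_rem_uniq _ Us) inE => /andP[].
  have lt_am : a < m by rewrite ltn_neqAle ne_am (allP le_m) ?(mem_rem ar).
  rewrite (negbTE ne_am) /= ((seq.permP perm_s) (fun e => a < e)) /= lt_am.
  by rewrite add1n add2n.
set k := size (rem m s).
have -> : iota 2 (size s) = rcons (map (addn 2) (iota 0 k)) (size s).+1.
  by rewrite size_s -/k -cats1 -[k.+1]addn1 iotaD -iotaDl addn0 /= add2n addn1.
by rewrite perm_sym perm_rcons perm_cons perm_map // perm_sym perm_ranks.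
Qed.

(* The representative of a cyclic class starting with 0; the default 1 of head
   rejects the empty word. *)
Definition normal_avoider (m : nat) (w : seq nat) : bool :=
  [&& perm_eq w (iota 0 m), head 1 w == 0 & ~~ cyc_pattern w].

(* Level m of the generating tree, made of words of length m.+1. *)
Fixpoint avoiders (m : nat) : seq (seq nat) :=
  if m is m'.+1 then [seq insert_max w a | w <- avoiders m', a <- [seq a <- w | active w a]]
  else [:: [:: 0]].

Lemma normal_avoider_insert n v a : normal_avoider n.+1 v -> a \in v -> active v a ->
  normal_avoider n.+2 (insert_max v a).
Proof.
case/and3P=> perm_v head_v avoid_v av act_a.
case/splitPr: av perm_v head_v avoid_v act_a => x y perm_v head_v avoid_v act_a.
rewrite /normal_avoider (insert_max_iota perm_v) perm_insert_iota //.
by rewrite cyc_pattern_insert // negb_or avoid_v act_a andbT; case: x {perm_v avoid_v act_a} head_v.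
Qed.

Lemma normal_avoider_remove n w : normal_avoider n.+2 w -> exists x a y,
  [/\ w = x ++ a :: n.+1 :: y, normal_avoider n.+1 (x ++ a :: y) & active (x ++ a :: y) a].
Proof.
case/and3P=> perm_w head_w avoid_w.
have nw : n.+1 \in w by rewrite (perm_mem perm_w) mem_iota ltnSn.
case/splitPr: nw perm_w head_w avoid_w => p y perm_w head_w avoid_w.
case/lastP: p perm_w head_w avoid_w => [// | x a]; rewrite cat_rcons => perm_w head_w avoid_w.
have perm_v : perm_eq (x ++ a :: y) (iota 0 n.+1).
  by rewrite -(perm_cons n.+1) -(permPr (perm_iotaSr n.+1)) -(permPl (perm_insert_cons _ _ _ _)).
move: avoid_w; rewrite cyc_pattern_insert // negb_or negbK => /andP[avoid_v act_a].
exists x, a, y; split=> //; rewrite /normal_avoider perm_v avoid_v andbT.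
by case: x {perm_w perm_v avoid_v act_a} head_w.
Qed.

Lemma mem_avoiders m w : (w \in avoiders m) = normal_avoider m.+1 w.
Proof.
elim: m w => [|m IHm] w.
  rewrite inE; apply/eqP/idP => [-> // | /and3P[perm_w /eqP head_w _]].
  by case: w perm_w head_w => [|z [|? ?]] /perm_size //= _ ->.
apply/allpairsPdep/idP => [[v [a [vm /[!mem_filter] /andP[act_a av] ->]]] | /normal_avoider_remove].
  by apply: normal_avoider_insert; rewrite // -IHm.
move=> [x [a [y [-> avoid_v act_a]]]]; exists (x ++ a :: y), a.
have /and3P[perm_v _ _] := avoid_v.
by rewrite IHm mem_filter act_a mem_cat mem_head orbT (insert_max_iota perm_v).
Qed.

Lemma insert_max_inj n v v' a a' :
  perm_eq v (iota 0 n.+1) -> perm_eq v' (iota 0 n.+1) -> a \in v -> a' \in v' ->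
  insert_max v a = insert_max v' a' -> v = v' /\ a = a'.
Proof.
move=> + + av av'; case/splitPr: av => x y perm_v; case/splitPr: av' => x' y' perm_v'.
rewrite (insert_max_iota perm_v) (insert_max_iota perm_v') => eq_w.
have /eqP := congr1 (index n.+1) eq_w.
rewrite (index_insert_max perm_v) (index_insert_max perm_v') eqSS => /eqP eq_size.
by move/eqP: eq_w; rewrite eqseq_cat // => /andP[/eqP-> /eqP[-> ->]].
Qed.

Lemma uniq_avoiders m : uniq (avoiders m).
Proof.
elim: m => [|m IHm] //=.
have perm_av v : v \in avoiders m -> perm_eq v (iota 0 m.+1) by rewrite mem_avoiders => /and3P[].
apply: allpairs_uniq_dep => [// | v vm |].
  by rewrite filter_uniq // (perm_uniq (perm_av v vm)) iota_uniq.
move=> _ _ /allpairsPdep[v [a [vm ar ->]]] /allpairsPdep[v' [a' [vm' ar' ->]]] /=.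
rewrite !mem_filter in ar ar'; case/andP: ar => _ av; case/andP: ar' => _ av'.
by case/(insert_max_inj (perm_av v vm) (perm_av v' vm') av av') => -> ->.
Qed.

Lemma active_max n v : perm_eq v (iota 0 n.+1) -> active v n.
Proof.
move=> perm_v; have nv : n \in v by rewrite (perm_mem perm_v) mem_iota ltnSn.
rewrite /active (eq_in_filter (a2 := pred0)) ?filter_pred0 // => z z_after /=.
have : z \in v by rewrite (perm_mem (perm_cyc_after nv)) inE z_after orbT.
by rewrite (perm_mem perm_v) mem_iota add0n ltnS => /andP[_]; rewrite leqNgt => /negbTE.
Qed.

Lemma sum_children n v d : normal_avoider n.+1 v ->
  sumn [seq catalan_tree d (n_active (insert_max v a)) | a <- [seq a <- v | active v a]] =
  catalan_tree d.+1 (n_active v).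
Proof.
case/and3P=> perm_v _ _; set A := [seq a <- v | active v a].
have -> : [seq catalan_tree d (n_active (insert_max v a)) | a <- A] =
          map (catalan_tree d) [seq (count (fun e => (a == n) || (a < e)) A).+1 | a <- A].
  rewrite -map_comp; apply/eq_in_map => a; rewrite /A mem_filter => /andP[act_a av] /=.
  case/splitPr: av perm_v act_a => x y perm_v act_a.
  by rewrite (insert_max_iota perm_v) n_active_insert.
rewrite catalan_tree_succ /n_active -size_filter; apply/perm_sumn/perm_map/perm_child_labels.
- by rewrite filter_uniq // (perm_uniq perm_v) iota_uniq.
- by rewrite mem_filter active_max // (perm_mem perm_v) mem_iota add0n ltnSn.
- by apply/allP => z; rewrite /A mem_filter (perm_mem perm_v) mem_iota add0n ltnS => /andP[].
Qed.

Lemma sum_avoiders m d :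
  sumn [seq catalan_tree d (n_active w) | w <- avoiders m] = catalan_tree (m + d) 1.
Proof.
elim: m d => [|m IHm] d; first by rewrite /= addn0.
rewrite addSnnS -IHm /= map_flatten sumn_flatten -!map_comp; congr sumn.
apply/eq_in_map => v; rewrite mem_avoiders => avoid_v.
by rewrite /= -map_comp (sum_children d avoid_v).
Qed.

Lemma size_avoiders m : size (avoiders m) = catalan m.
Proof.
have := sum_avoiders m 0; rewrite addn0 catalan_tree_root => <-.
by rewrite -count_predT -sumn_count.
Qed.

Section CyclicPermutations.

Variable n : nat.
Implicit Types s t : 'S_n.

Lemma size_word s : size (word s) = n.
Proof. by rewrite size_map size_enum_ord. Qed.

Lemma nth_word s (i : 'I_n) : nth 0 (word s) i = s i.
Proof. by rewrite (nth_map i) ?size_enum_ord // nth_ord_enum. Qed.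

Lemma word_inj : injective (@word n).
Proof.
move=> s t eq_st; apply/permP => i; apply: val_inj.
by rewrite /= -!nth_word eq_st.
Qed.

Lemma uniq_word s : uniq (word s).
Proof. by rewrite map_inj_uniq ?enum_uniq // => i j /val_inj/perm_inj. Qed.

Lemma perm_word s : perm_eq (word s) (iota 0 n).
Proof.
apply: uniq_perm; rewrite ?uniq_word ?iota_uniq // => z; rewrite mem_iota /=.
apply/mapP/idP => [[i _ ->] | lt_zn]; first exact: ltn_ord.
by exists (s^-1 (Ordinal lt_zn))%g; rewrite ?mem_enum ?permKV.
Qed.

Lemma word_onto w : perm_eq w (iota 0 n) -> exists s, word s = w.
Proof.
move=> perm_w; have size_w : size w = n by rewrite (perm_size perm_w) size_iota.
have lt_wn (i : 'I_n) : nth 0 w i < n.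
  have : nth 0 w i \in w by rewrite mem_nth ?size_w.
  by rewrite (perm_mem perm_w) mem_iota.
pose f i := Ordinal (lt_wn i).
have inj_f : injective f.
  move=> i j /(congr1 val) /= /eqP; rewrite nth_uniq ?size_w // => [/eqP/val_inj //|].
  by rewrite (perm_uniq perm_w) iota_uniq.
exists (perm inj_f); apply: (@eq_from_nth _ 0); rewrite ?size_word // => i lt_in.
by rewrite (nth_word _ (Ordinal lt_in)) permE.
Qed.

Lemma cyc_contains_pattern s : cyc_contains s = cyc_pattern (word s).
Proof.
apply/existsP/idP => [[k contains_k] | /(cyc_pattern_contains (uniq_word s))[k]].
  by rewrite -(cyc_pattern_rot k (uniq_word s)) contains_cyc_pattern ?rot_uniq ?uniq_word.
by rewrite size_word => lt_kn; exists (Ordinal lt_kn).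
Qed.

Lemma cyc_sub s t k : word t = rot k (word s) -> cyc t \subset cyc s.
Proof.
move=> def_t; apply/subsetP => u; rewrite !inE => /existsP[j /eqP->].
rewrite def_t rot_rot_add; set i := rot_add _ _ _; apply/existsP.
case: (ltnP i n) => [lt_in | ge_in]; first by exists (Ordinal lt_in).
have n_gt0 : 0 < n := leq_ltn_trans (leq0n j) (ltn_ord j).
by exists (Ordinal n_gt0); rewrite rot0 rot_oversize // size_word.
Qed.

Lemma cyc_rot s t k : word t = rot k (word s) -> cyc t = cyc s.
Proof.
move=> def_t; apply/eqP; rewrite eqEsubset (cyc_sub def_t) (@cyc_sub _ _ (size (word t) - k)) //.
by rewrite def_t; symmetry; exact: rotK.
Qed.

Definition normal_perms : {set 'S_n} := [set s | normal_avoider n (word s)].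

Lemma Av_cyc_normal : 0 < n -> Av_cyc n = @cyc n @: normal_perms.
Proof.
move=> n_gt0; apply/setP => C; apply/imsetP/imsetP => [[s] | [s]].
  rewrite inE => avoid_s ->; set k := index 0 (word s).
  have zs : 0 \in word s by rewrite (perm_mem (perm_word s)) mem_iota.
  have [t def_t] : exists t, word t = rot k (word s).
    by apply: word_onto; rewrite perm_rot perm_word.
  exists t; last exact: (esym (cyc_rot def_t)).
  rewrite inE /normal_avoider def_t perm_rot perm_word cyc_pattern_rot ?uniq_word //.
  by rewrite rot_index_cyc_after // eqxx -cyc_contains_pattern.
rewrite inE => /and3P[_ _ avoid_s] ->; exists s => //.
by rewrite inE cyc_contains_pattern.
Qed.

Lemma cyc_normal_inj : {in normal_perms &, injective (@cyc n)}.
Proof.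
move=> s t; rewrite !inE => /and3P[_ head_s _] /and3P[_ head_t _] eq_st.
have n_gt0 : 0 < n by rewrite -(size_word t); move: head_t; case: (word t).
have : t \in cyc t by rewrite inE; apply/existsP; exists (Ordinal n_gt0); rewrite rot0.
rewrite -eq_st inE => /existsP[k /eqP def_t]; apply: word_inj.
rewrite def_t (_ : nat_of_ord k = 0) ?rot0 //.
move: head_t; rewrite def_t /rot (drop_nth 0) ?size_word //= => /eqP head_k.
apply/eqP; rewrite -(nth_uniq 0 _ _ (uniq_word s)) ?size_word // head_k.
by move: head_s; case: (word s) => //= z ? /eqP->.
Qed.

Lemma card_normal_perms : 0 < n -> #|normal_perms| = catalan n.-1.
Proof.
move=> n_gt0; rewrite -size_avoiders cardE -(size_map (@word n)); apply/perm_size/uniq_perm.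
- by rewrite map_inj_uniq ?enum_uniq //; exact: word_inj.
- exact: uniq_avoiders.
move=> w; rewrite mem_avoiders prednK //; apply/mapP/idP => [[s] | norm_w].
  by rewrite mem_enum inE => norm_s ->.
have /and3P[perm_w _ _] := norm_w; have [s def_s] := word_onto perm_w.
by exists s; rewrite // mem_enum inE def_s.
Qed.

End CyclicPermutations.

Theorem theorem5p10 (n : nat) : 1 <= n -> #|Av_cyc n| = catalan n.-1.
Proof.
move=> n_gt0; rewrite (Av_cyc_normal n_gt0) card_in_imset ?card_normal_perms //.
exact: cyc_normal_inj.
Qed.
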